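(* (i) For every combinatorial line $U\in \mathscr{L}$ the pair $\Pi^U=(P^U, \psi_{U})$ is a picture over $G$ with $\Pi^U_x=\psi_U^{-1}(x)=U$. (ii) If $U, V\in \mathscr{L}$ are distinct, then $P^U\cap P^V=U\cap V$.
   Context: Let $k\ge 3$ and let $G$ be a $k$-uniform hypergraph. A $k$-element subset $L$ of a Hales-Jewett cube $[k]^m$ is a quasiline if for every coordinate the entries of the points of $L$ in that coordinate are either all identical or mutually distinct. Over an arbitrary finite alphabet $A$, a combinatorial line in $A^n$ is the image of a map $\eta\colon A\to A^n$ given by a partition $[n]=C\,\dot\cup\, M$ with $M\neq\emptyset$ and a function $g\colon C\to A$, where the $i$-th coordinate of $\eta(a)$ is $g(i)$ for $i\in C$ and $a$ for $i\in M$ (such $\eta$ is a combinatorial embedding). A picture over $G$ is a pair $\Pi=(P,\psi)$ with $P\subseteq [k]^m$ and $\psi\colon P\to V(G)$ such that every quasiline $L\subseteq P$ is a combinatorial line with $\psi[L]\in E(G)$; for a vertex $x$ of $G$ the music line is $\Pi_x=\psi^{-1}(x)$. Now let $\Pi=(P,\psi_\Pi)$ be a picture over $G$ with $P\subseteq[k]^m$, let $x$ be a vertex of $G$, and, viewing the music line $\Pi_x$ as an alphabet, let $\mathscr{L}$ be a collection of combinatorial lines in the $n$-dimensional Hales-Jewett cube $\Pi_x^n$. For every $U\in\mathscr{L}$ let $\eta_U\colon \Pi_x\to \Pi_x^n$ be the combinatorial embedding with image $U$, given by a partition $[n]=C\,\dot\cup\, M$ ($M\ne\emptyset$) and $g\colon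 C\to\Pi_x$. Let $\eta_U^+\colon [k]^m\to([k]^m)^n=[k]^{mn}$ be its extension defined by the same data: the $i$-th block of $\eta_U^+(a)$ is $g(i)$ for $i\in C$ and $a$ for $i\in M$ (this is a combinatorial embedding over the alphabet $[k]$, and it maps quasilines to quasilines and combinatorial lines to combinatorial lines). Set $P^U=\eta_U^+(P)$ and $\psi_U=\psi_\Pi\circ(\eta_U^+|_{P})^{-1}\colon P^U\to V(G)$. *)

From mathcomp Require Import all_boot.
Set Implicit Arguments. Unset Strict Implicit. Unset Printing Implicit Defensive.

(* Points of the Hales-Jewett cube A^I are finite functions {ffun I -> A};
   the coordinate set I is an arbitrary finite type (I = 'I_m for [k]^m,
   I = 'I_n * 'I_m for ([k]^m)^n = [k]^{mn}). *)

(* combinatorial embedding given by the partition I = C u M (C = ~: M) and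
   g : C -> A (values of g on M are ignored) *)
Definition comb_emb (A I : finType) (M : {set I}) (g : I -> A) (a : A)
  : {ffun I -> A} := [ffun i => if i \in M then a else g i].

Definition comb_line (A I : finType) (L : {set {ffun I -> A}}) : Prop :=
  exists (M : {set I}) (g : I -> A),
    M != set0 /\ L = [set comb_emb M g a | a : A].

Definition quasiline (k : nat) (I : finType) (L : {set {ffun I -> 'I_k}}) : Prop :=
  #|L| = k /\
  forall i : I,
    (forall a b, a \in L -> b \in L -> a i = b i) \/
    (forall a b, a \in L -> b \in L -> a i = b i -> a = b).

(* picture (P, psi) over the hypergraph with edge set E; psi is given as a
   total function whose values outside P are irrelevant *)
Definition picture (k : nat) (I V : finType) (E : {set {set V}})
  (P : {set {ffun I -> 'I_k}}) (psi : {ffun I -> 'I_k} -> V) : Prop :=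
  forall L : {set {ffun I -> 'I_k}},
    L \subset P -> quasiline L -> comb_line L /\ psi @: L \in E.

Definition music_line (k : nat) (I V : finType) (P : {set {ffun I -> 'I_k}})
  (psi : {ffun I -> 'I_k} -> V) (x : V) : {set {ffun I -> 'I_k}} :=
  [set a in P | psi a == x].

Definition music_alph (k : nat) (I V : finType) (P : {set {ffun I -> 'I_k}})
  (psi : {ffun I -> 'I_k} -> V) (x : V) : finType :=
  {a : {ffun I -> 'I_k} | a \in music_line P psi x}.

(* extension eta^+ : [k]^m -> ([k]^m)^n = [k]^('I_n * 'I_m) defined by the
   same data (M, g) *)
Definition ext_emb (k m n : nat) (M : {set 'I_n}) (g : 'I_n -> {ffun 'I_m -> 'I_k})
  (a : {ffun 'I_m -> 'I_k}) : {ffun ('I_n * 'I_m) -> 'I_k} :=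
  [ffun ij => if ij.1 \in M then a ij.2 else g ij.1 ij.2].

Definition flat (k m n : nat) (w : {ffun 'I_n -> {ffun 'I_m -> 'I_k}})
  : {ffun ('I_n * 'I_m) -> 'I_k} := [ffun ij => w ij.1 ij.2].

Definition lift_set (k m n : nat) (V : finType) (P : {set {ffun 'I_m -> 'I_k}})
  (psi : {ffun 'I_m -> 'I_k} -> V) (x : V)
  (U : {set {ffun 'I_n -> music_alph P psi x}}) : {set {ffun ('I_n * 'I_m) -> 'I_k}} :=
  [set flat [ffun i => val (w i)] | w : {ffun 'I_n -> music_alph P psi x} in U].

Definition ext_set (k m n : nat) (M : {set 'I_n}) (g : 'I_n -> {ffun 'I_m -> 'I_k})
  (P : {set {ffun 'I_m -> 'I_k}}) : {set {ffun ('I_n * 'I_m) -> 'I_k}} :=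
  [set ext_emb M g a | a in P].

(* psi_U = psi o (eta_U^+|_P)^{-1} on P^U; outside P^U its value (here the
   default d) is irrelevant *)
Definition ext_psi (k m n : nat) (V : finType) (d : V) (M : {set 'I_n})
  (g : 'I_n -> {ffun 'I_m -> 'I_k}) (P : {set {ffun 'I_m -> 'I_k}})
  (psi : {ffun 'I_m -> 'I_k} -> V) (y : {ffun ('I_n * 'I_m) -> 'I_k}) : V :=
  if [pick a in P | ext_emb M g a == y] is Some a then psi a else d.

From mathcomp Require Import all_boot.
Set Implicit Arguments. Unset Strict Implicit. Unset Printing Implicit Defensive.

(* Every point of [k]^m is read off, unchanged, in any block i of M of its
   image under eta^+, so eta^+ is injective and pulls quasilines of P^U back to
   quasilines of P; the picture axioms for P then push forward, because eta^+
   composed with a combinatorial embedding is again one.  For (ii), if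
   eta_U^+(a) = eta_V^+(b) with U != V, comparing the blocks in which the two
   embeddings differ shows that a is one of the constant blocks of U or V,
   hence a point of the music line Pi_x. *)

Lemma imset_preimset_sub (aT rT : finType) (f : aT -> rT) (A : {set aT})
    (B : {set rT}) :
  B \subset f @: A -> f @: [set a in A | f a \in B] = B.
Proof.
move=> sBfA; apply/setP => y; apply/imsetP/idP => [[a] | yB].
  by rewrite inE => /andP[_ faB] ->.
have /imsetP[a Aa ya] := subsetP sBfA y yB.
by exists a; rewrite // inE Aa -ya yB.
Qed.

Lemma quasiline_of_imset (k : nat) (I J : finType)
    (f : {ffun J -> 'I_k} -> {ffun I -> 'I_k}) (p : J -> I)
    (L : {set {ffun J -> 'I_k}}) :
  (forall a j, f a (p j) = a j) -> quasiline (f @: L) -> quasiline L.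
Proof.
move=> fp [card_fL q_fL].
have f_inj : injective f by move=> a b fab; apply/ffunP => j; rewrite -!fp fab.
split; first by rewrite -(card_imset L f_inj).
move=> j; case: (q_fL (p j)) => [const | distinct]; [left | right] => a b aL bL.
  by rewrite -!fp; apply: const; apply: imset_f.
by move=> ab; apply: f_inj; apply: distinct; rewrite ?imset_f // !fp.
Qed.

Section CombinatorialEmbedding.
Variables (A I : finType).

Lemma comb_emb_map (B : finType) (h : A -> B) (M : {set I}) (g : I -> A) a :
  comb_emb M (fun i => h (g i)) (h a) = [ffun i => h (comb_emb M g a i)].
Proof. by apply/ffunP => i; rewrite !ffunE; case: ifP. Qed.

Lemma comb_emb_eq (M1 M2 : {set I}) (g1 g2 : I -> A) (a b : A) :
  M1 != set0 -> comb_emb M1 g1 a = comb_emb M2 g2 b ->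
  [\/ a \in codom g1, a \in codom g2 | comb_emb M1 g1 =1 comb_emb M2 g2].
Proof.
move=> /set0Pn[i0 i0M1] /ffunP e12.
have coord i : (if i \in M1 then a else g1 i) = (if i \in M2 then b else g2 i).
  by have := e12 i; rewrite !ffunE.
have [sM12 | /subsetPn[i iM1 iM2]] := boolP (M1 \subset M2); last first.
  by apply: Or32; apply/codomP; exists i; have := coord i; rewrite iM1 (negbTE iM2).
have [sM21 | /subsetPn[i iM2 iM1]] := boolP (M2 \subset M1); last first.
  apply: Or31; apply/codomP; exists i.
  have := coord i0; rewrite i0M1 (subsetP sM12 _ i0M1) => ->.
  by have := coord i; rewrite iM2 (negbTE iM1) => ->.
apply: Or33 => c; apply/ffunP => i; rewrite !ffunE.
have eM : M2 = M1 by apply/eqP; rewrite eqEsubset sM21.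
by rewrite eM; case: ifP => // iM1; have := coord i; rewrite eM iM1.
Qed.

End CombinatorialEmbedding.

Section Extension.
Variables (k m n : nat) (M : {set 'I_n}) (g : 'I_n -> {ffun 'I_m -> 'I_k}).
Hypothesis M_neq0 : M != set0.

Lemma flat_inj : injective (@flat k m n).
Proof.
move=> v w /ffunP vw; apply/ffunP => i; apply/ffunP => j.
by have := vw (i, j); rewrite !ffunE.
Qed.

Lemma ext_embE a : ext_emb M g a = flat (comb_emb M g a).
Proof. by apply/ffunP => -[i j]; rewrite !ffunE; case: ifP. Qed.

Lemma ext_emb_block a i j : i \in M -> ext_emb M g a (i, j) = a j.
Proof. by move=> iM; rewrite ffunE /= iM. Qed.

Lemma ext_emb_inj : injective (ext_emb M g).
Proof.
have [i0 i0M] := set0Pn _ M_neq0.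
move=> a b eab; apply/ffunP => j.
by rewrite -(ext_emb_block a j i0M) eab ext_emb_block.
Qed.

Lemma ext_emb_comb_emb (M' : {set 'I_m}) (g' : 'I_m -> 'I_k) c :
  ext_emb M g (comb_emb M' g' c) =
  comb_emb [set ij | (ij.1 \in M) && (ij.2 \in M')]
           (fun ij => if ij.1 \in M then g' ij.2 else g ij.1 ij.2) c.
Proof.
apply/ffunP => -[i j]; rewrite !ffunE inE /=.
by case: (i \in M); case: (j \in M').
Qed.

Lemma comb_line_ext (L : {set {ffun 'I_m -> 'I_k}}) :
  comb_line L -> comb_line (ext_emb M g @: L).
Proof.
case=> M' [g' [M'_neq0 ->]].
exists [set ij | (ij.1 \in M) && (ij.2 \in M')],
  (fun ij => if ij.1 \in M then g' ij.2 else g ij.1 ij.2).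
split; last by rewrite -imset_comp; apply: eq_imset => c; apply: ext_emb_comb_emb.
have [i0 i0M] := set0Pn _ M_neq0; have [j0 j0M'] := set0Pn _ M'_neq0.
by apply/set0Pn; exists (i0, j0); rewrite inE /= i0M j0M'.
Qed.

Variables (V : finType) (d : V) (P : {set {ffun 'I_m -> 'I_k}})
  (psi : {ffun 'I_m -> 'I_k} -> V).

Lemma ext_psi_ext_emb a : a \in P -> ext_psi d M g P psi (ext_emb M g a) = psi a.
Proof.
move=> Pa; rewrite /ext_psi; case: pickP => [a' /andP[_ /eqP /ext_emb_inj ->] //|].
by move/(_ a); rewrite Pa eqxx.
Qed.

Lemma picture_ext (E : {set {set V}}) :
  picture E P psi -> picture E (ext_set M g P) (ext_psi d M g P psi).
Proof.
move=> picP L sLP qL.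
set L' := [set a in P | ext_emb M g a \in L].
have fL' : ext_emb M g @: L' = L by apply: imset_preimset_sub.
have sL'P : L' \subset P by apply/subsetP => a; rewrite inE => /andP[].
have [i0 i0M] := set0Pn _ M_neq0.
have qL' : quasiline L'.
  apply: (quasiline_of_imset (f := ext_emb M g) (p := pair i0)) => [a j|].
    exact: ext_emb_block.
  by rewrite fL'.
have [lineL' EL'] := picP L' sL'P qL'.
split; first by rewrite -fL'; apply: comb_line_ext.
rewrite -fL' -imset_comp (eq_in_imset (g := psi)) // => a.
by rewrite inE => /andP[Pa _]; apply: ext_psi_ext_emb.
Qed.

Lemma music_line_ext (x : V) :
  music_line (ext_set M g P) (ext_psi d M g P psi) x =
  ext_emb M g @: music_line P psi x.
Proof.
apply/setP => y; apply/idP/imsetP => [|[a]].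
  rewrite inE => /andP[/imsetP[a Pa ->]]; rewrite ext_psi_ext_emb // => psia.
  by exists a; rewrite // inE Pa.
rewrite inE => /andP[Pa psia] ->.
by rewrite inE imset_f ?ext_psi_ext_emb.
Qed.

End Extension.

Section MusicLineAlphabet.
Variables (k m n : nat) (V : finType) (P : {set {ffun 'I_m -> 'I_k}})
  (psi : {ffun 'I_m -> 'I_k} -> V) (x : V).

Lemma lift_set_line (M : {set 'I_n}) (g : 'I_n -> music_alph P psi x) U :
  U = [set comb_emb M g c | c : music_alph P psi x] ->
  lift_set U = ext_emb M (fun i => val (g i)) @: music_line P psi x.
Proof.
move=> ->; apply/setP => y; apply/imsetP/imsetP => [[_ /imsetP[c _ ->] ->] | [a xa ->]].
  by exists (val c); rewrite ?(valP c) // ext_embE comb_emb_map.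
exists (comb_emb M g (Sub a xa : music_alph P psi x)); first exact: imset_f.
by rewrite ext_embE -[a]/(val (Sub a xa : music_alph P psi x)) comb_emb_map.
Qed.

Lemma ext_emb_meet_music (M1 M2 : {set 'I_n}) (g1 g2 : 'I_n -> music_alph P psi x) a b :
  M1 != set0 -> ~ comb_emb M1 g1 =1 comb_emb M2 g2 ->
  ext_emb M1 (fun i => val (g1 i)) a = ext_emb M2 (fun i => val (g2 i)) b ->
  a \in music_line P psi x.
Proof.
move=> M1_neq0 g12; rewrite !ext_embE => /flat_inj /(comb_emb_eq M1_neq0).
case=> [/codomP[i ->] | /codomP[i ->] | same]; [exact: valP | exact: valP |].
case: g12 => c; apply/ffunP => i; apply: val_inj.
by have /ffunP/(_ i) := same (val c); rewrite !comb_emb_map !ffunE.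
Qed.

Lemma ext_set_meet (M1 M2 : {set 'I_n}) (g1 g2 : 'I_n -> music_alph P psi x) :
  M1 != set0 -> M2 != set0 -> ~ comb_emb M1 g1 =1 comb_emb M2 g2 ->
  ext_set M1 (fun i => val (g1 i)) P :&: ext_set M2 (fun i => val (g2 i)) P =
  ext_emb M1 (fun i => val (g1 i)) @: music_line P psi x
    :&: ext_emb M2 (fun i => val (g2 i)) @: music_line P psi x.
Proof.
move=> M1_neq0 M2_neq0 g12; have sxP : music_line P psi x \subset P.
  by apply/subsetP => a; rewrite inE => /andP[].
apply/eqP; rewrite eqEsubset (setISS (imsetS _ sxP) (imsetS _ sxP)) andbT.
apply/subsetP => y /setIP[/imsetP[a _ ya] /imsetP[b _ yb]].
rewrite inE {1}ya yb !imset_f //.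
  by apply: (ext_emb_meet_music (b := a) M2_neq0 (fun e => g12 (fsym e))); rewrite -ya -yb.
by apply: (ext_emb_meet_music (b := b) M1_neq0 g12); rewrite -ya -yb.
Qed.

End MusicLineAlphabet.

Theorem fact4p4 (k : nat) (hk : 3 <= k) (V : finType) (E : {set {set V}})
  (hE : forall e, e \in E -> #|e| = k)
  (m : nat) (P : {set {ffun 'I_m -> 'I_k}}) (psi : {ffun 'I_m -> 'I_k} -> V)
  (hpic : picture E P psi) (x : V) (n : nat)
  (Ls : {set {set {ffun 'I_n -> music_alph P psi x}}})
  (M : {set {ffun 'I_n -> music_alph P psi x}} -> {set 'I_n})
  (g : {set {ffun 'I_n -> music_alph P psi x}} -> 'I_n -> music_alph P psi x)
  (hL : forall U, U \in Ls ->
     M U != set0 /\ U = [set comb_emb (M U) (g U) a | a : music_alph P psi x]) :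
  (forall U, U \in Ls ->
     picture E (ext_set (M U) (fun i => val (g U i)) P)
               (ext_psi x (M U) (fun i => val (g U i)) P psi) /\
     music_line (ext_set (M U) (fun i => val (g U i)) P)
                (ext_psi x (M U) (fun i => val (g U i)) P psi) x
       = lift_set U) /\
  (forall U W, U \in Ls -> W \in Ls -> U != W ->
     ext_set (M U) (fun i => val (g U i)) P :&: ext_set (M W) (fun i => val (g W i)) P
       = lift_set U :&: lift_set W).
Proof.
split=> [U LsU | U W LsU LsW UW].
  have [MU_neq0 defU] := hL U LsU.
  by rewrite music_line_ext // (lift_set_line defU); split; first exact: picture_ext.
have [MU_neq0 defU] := hL U LsU; have [MW_neq0 defW] := hL W LsW.
rewrite (lift_set_line defU) (lift_set_line defW); apply: ext_set_meet => // same.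
by move/eqP: UW; apply; rewrite defU defW; apply: eq_imset.
Qed.
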